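(* In the standing setting with the noisy iteration (I)–(III), for every $k\ge0$ (almost surely): $$m_f\|X^{(k+1)}-X^*\|^2\le\|U^{(k)}-U^*\|_G^2-\|U^{(k+1)}-U^*\|_G^2-\|U^{(k)}-U^{(k+1)}\|_G^2-\langle X^{(k+1)}-X^*,\sqrt2Dw^{(k+1)}\rangle.$$ Consequently, $$\Big\|X^{(k+1)}-X^*+\frac1{\sqrt2m_f}Dw^{(k+1)}\Big\|^2\le\frac1{m_f}\|U^{(k)}-U^*\|_G^2+\frac1{2m_f^2}\|Dw^{(k+1)}\|^2.$$
   Context: Standing setting. $\mathcal{G}=(\mathcal{V},\mathcal{E})$ is a connected undirected graph without self-loops on $\mathcal{V}=\{1,\dots,N\}$. Set $\mathcal{N}_i=\{j:(i,j)\in\mathcal{E}\}$ and $N_i=|\mathcal{N}_i|$. $\mathcal{A}$ is the set of directed arcs obtained by taking both orientations $(i,j)$ and $(j,i)$ of every edge of $\mathcal{E}$, so $|\mathcal{A}|=2|\mathcal{E}|$. Fix an enumeration $q=1,\dots,|\mathcal{A}|$ of $\mathcal{A}$. Each $f_i:\mathbb{R}^d\to\mathbb{R}$ is differentiable and $m_{f_i}$-strongly convex, i.e. $\langle\nabla f_i(u)-\nabla f_i(v),u-v\rangle\ge m_{f_i}\|u-v\|^2$ with $m_{f_i}>0$. Its gradient is $M_{f_i}$-Lipschitz. The function $\sum_i f_i$ has a (unique) minimizer $x^*$. For $X=(x_1,\dots,x_N)\in\mathbb{R}^{Nd}$ let $f(X)=\sum_i f_i(x_i)$, $m_f=\min_i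 m_{f_i}$ and $M_f=\max_i M_{f_i}$. $M_+,M_-\in\mathbb{R}^{Nd\times|\mathcal{A}|d}$ are block matrices with $d\times d$ blocks. If the $q$-th arc is $(i,j)$, then: - the $(i,q)$ and $(j,q)$ blocks of $M_+$ are $I_d$; - the $(i,q)$ block of $M_-$ is $I_d$ and its $(j,q)$ block is $-I_d$; - all other blocks are zero. $D=\mathrm{diag}(N_1,\dots,N_N)\otimes I_d$. $X^*=(x^*,\dots,x^* )$, $Z^*=\tfrac12M_+^TX^*$, and $\beta^*$ is the unique vector in the column space of $M_-^T$ with $\nabla f(X^* )+M_-\beta^*=0$. Set $U^*=(Z^*,\beta^* )$. For $\rho>0$, $G=\mathrm{diag}(\rho I_{|\mathcal{A}|d},\rho^{-1}I_{|\mathcal{A}|d})$ and $\|v\|_G^2=v^TGv$. Noisy iteration. Fix $\rho>0$. Let $w^{(1)},w^{(2)},\dots$ be i.i.d. $\mathcal{N}(0,I_{Nd})$, independent of a random initialization $(X^{(0)},\beta^{(0)})$ in which $\beta^{(0)}$ lies in the column space of $M_-^T$. Set $Z^{(0)}=\tfrac12M_+^TX^{(0)}$. For $k\ge0$ the random vectors $X^{(k+1)}\in\mathbb{R}^{Nd}$ and $Z^{(k+1)},\beta^{(k+1)}\in\mathbb{R}^{|\mathcal{A}|d}$ satisfy (I) $\nabla f(X^{(k+1)})+M_-\beta^{(k+1)}+\sqrt2Dw^{(k+1)}=\rho M_+(Z^{(k)}-Z^{(k+1)})$, (II) $\beta^{(k+1)}-\beta^{(k)}-\tfrac\rho2M_-^TX^{(k+1)}=0$,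 (III) $\tfrac12M_+^TX^{(k+1)}-Z^{(k+1)}=0$. Set $U^{(k)}=(Z^{(k)},\beta^{(k)})$. *)

From HB Require Import structures.
From mathcomp Require Import all_boot all_order all_algebra.
From mathcomp Require Import all_classical all_reals all_analysis.
Set Implicit Arguments. Unset Strict Implicit. Unset Printing Implicit Defensive.
Import Order.TTheory GRing.Theory Num.Theory.
Import numFieldNormedType.Exports.
Local Open Scope ring_scope.

Section Defs.
Variable R : realType.

Definition dotv (d : nat) (u v : 'rV[R]_d) : R := \sum_(j < d) u 0 j * v 0 j.
Definition sqnv (d : nat) (u : 'rV[R]_d) : R := dotv u u.

(* Stacked vectors: an element of R^{n d} (n blocks of size d) is represented
   as an n x d matrix whose i-th row is the i-th block.  Then the block matrix
   (M \otimes I_d) acting on stacked vectors is  M *m X. *)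
Definition ip (n d : nat) (X Y : 'M[R]_(n, d)) : R :=
  \sum_(i < n) \sum_(j < d) X i j * Y i j.
Definition sqn (n d : nat) (X : 'M[R]_(n, d)) : R := ip X X.

(* G-norm of U = (Z, beta):  rho ||Z||^2 + rho^-1 ||beta||^2 *)
Definition Gsqn (nA d : nat) (rho : R) (Z beta : 'M[R]_(nA, d)) : R :=
  rho * sqn Z + rho^-1 * sqn beta.

Definition is_gradient (d : nat) (f : 'rV[R]_d -> R^o) (g : 'rV[R]_d -> 'rV[R]_d) :=
  forall x, differentiable f x /\ forall v, 'D_v f x = dotv (g x) v.

Definition simple_connected_graph (N : nat) (e : rel 'I_N) :=
  symmetric e /\ irreflexive e /\ forall i j, connect e i j.

(* arc : 'I_nA -> 'I_N * 'I_N is an enumeration of the set of directed arcs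
   (both orientations of every edge). *)
Definition arc_enum (N nA : nat) (e : rel 'I_N) (arc : 'I_nA -> 'I_N * 'I_N) :=
  injective arc /\ (forall q, e (arc q).1 (arc q).2) /\
  (forall i j, e i j -> exists q, arc q = (i, j)).

(* scalar incidence matrices; the paper's M_+, M_- are Mplus (x) I_d, Mminus (x) I_d *)
Definition Mplus (N nA : nat) (arc : 'I_nA -> 'I_N * 'I_N) : 'M[R]_(N, nA) :=
  \matrix_(i, q) (if (i == (arc q).1) || (i == (arc q).2) then 1 else 0).
Definition Mminus (N nA : nat) (arc : 'I_nA -> 'I_N * 'I_N) : 'M[R]_(N, nA) :=
  \matrix_(i, q) (if i == (arc q).1 then 1 else if i == (arc q).2 then -1 else 0).

(* D = diag(N_1,...,N_N) (x) I_d, N_i the degree of i *)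
Definition degmx (N : nat) (e : rel 'I_N) : 'M[R]_N :=
  diag_mx (\row_(i < N) (#|[set j | e i j]|)%:R).

Definition stack_grad (N d : nat) (g : 'I_N -> 'rV[R]_d -> 'rV[R]_d)
  (X : 'M[R]_(N, d)) : 'M[R]_(N, d) := \matrix_(i, j) g i (row i X) 0 j.

Definition stack_const (N d : nat) (x : 'rV[R]_d) : 'M[R]_(N, d) :=
  \matrix_(i, j) x 0 j.

End Defs.

(* At the optimum, grad f(X* ) + M_- beta* = 0 and M_-^T X* = 0.  Subtracting
   this from step (I) and pairing with X^(k+1) - X*, strong monotonicity bounds
   m_f ||X^(k+1) - X*||^2 by
     2 rho <Z^(k+1) - Z*, Z^(k) - Z^(k+1)> - <M_-^T (X^(k+1) - X* ), beta^(k+1) - beta*>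
   minus the noise term.  Steps (II) and (III) rewrite M_-^T (X^(k+1) - X* ) and
   M_+^T (X^(k+1) - X* ) as increments of beta and Z, which turns this bound into
   the polarization identity 2<u - v, v> = |u|^2 - |v|^2 - |u - v|^2 in the
   G-norm.  The second inequality then completes the square in the noise. *)
From HB Require Import structures.
From mathcomp Require Import all_boot all_order all_algebra.
From mathcomp Require Import all_classical all_reals all_analysis.
From mathcomp Require Import ring lra.
Import Order.TTheory GRing.Theory Num.Theory.
Import numFieldNormedType.Exports.
Local Open Scope ring_scope.
Set Implicit Arguments. Unset Strict Implicit.

Section InnerProduct.
Variables (R : realType) (n d : nat).
Implicit Types X Y W : 'M[R]_(n, d).

Lemma ipC X Y : ip X Y = ip Y X.
Proof. by apply: eq_bigr => i _; apply: eq_bigr => j _; rewrite mulrC. Qed.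

Lemma ipDl X Y W : ip (X + Y) W = ip X W + ip Y W.
Proof.
rewrite /ip -big_split; apply: eq_bigr => i _.
by rewrite -big_split; apply: eq_bigr => j _; rewrite mxE mulrDl.
Qed.

Lemma ipZl a X Y : ip (a *: X) Y = a * ip X Y.
Proof.
rewrite /ip mulr_sumr; apply: eq_bigr => i _.
by rewrite mulr_sumr; apply: eq_bigr => j _; rewrite mxE mulrA.
Qed.

Lemma ipNl X Y : ip (- X) Y = - ip X Y.
Proof. by rewrite -scaleN1r ipZl mulN1r. Qed.

Lemma ipBl X Y W : ip (X - Y) W = ip X W - ip Y W.
Proof. by rewrite ipDl ipNl. Qed.

Lemma ipDr X Y W : ip W (X + Y) = ip W X + ip W Y.
Proof. by rewrite ipC ipDl !(ipC W). Qed.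

Lemma ipZr a X Y : ip Y (a *: X) = a * ip Y X.
Proof. by rewrite ipC ipZl ipC. Qed.

Lemma ipBr X Y W : ip W (X - Y) = ip W X - ip W Y.
Proof. by rewrite ipC ipBl !(ipC W). Qed.

Lemma sqnD X Y : sqn (X + Y) = sqn X + 2 * ip X Y + sqn Y.
Proof. rewrite /sqn ipDl !ipDr (ipC Y X); lra. Qed.

Lemma sqnZ a X : sqn (a *: X) = a ^+ 2 * sqn X.
Proof. by rewrite /sqn ipZl ipZr mulrA -expr2. Qed.

Lemma sqnN X : sqn (- X) = sqn X.
Proof. by rewrite -scaleN1r sqnZ sqrrN expr1n mul1r. Qed.

Lemma sqn_ge0 X : 0 <= sqn X.
Proof. by apply: sumr_ge0 => i _; apply: sumr_ge0 => j _; exact: sqr_ge0. Qed.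

Lemma sqn_addZ_le (mf Q : R) X W : 0 < mf ->
  mf * sqn X + ip X W <= Q ->
  sqn (X + (2 * mf)^-1 *: W) <= mf^-1 * Q + ((2 * mf) ^+ 2)^-1 * sqn W.
Proof.
move=> mf_gt0 le_Q.
have mf_neq0 : mf != 0 by rewrite gt_eqF.
have -> : sqn (X + (2 * mf)^-1 *: W)
          = mf^-1 * (mf * sqn X + ip X W) + ((2 * mf) ^+ 2)^-1 * sqn W.
  by rewrite sqnD ipZr sqnZ exprVn; field.
by rewrite lerD2r ler_wpM2l // invr_ge0 ltW.
Qed.

End InnerProduct.

Lemma ip_mulmxl (R : realType) n m d (A : 'M[R]_(n, m)) (X : 'M[R]_(m, d))
    (Y : 'M[R]_(n, d)) :
  ip (A *m X) Y = ip X (A^T *m Y).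
Proof.
rewrite /ip.
transitivity (\sum_(k < m) \sum_(i < n) \sum_(j < d) A i k * X k j * Y i j).
  rewrite [RHS]exchange_big /=; apply: eq_bigr => i _.
  rewrite [RHS]exchange_big /=; apply: eq_bigr => j _.
  by rewrite mxE big_distrl.
apply: eq_bigr => k _; rewrite exchange_big /=; apply: eq_bigr => j _.
by rewrite mxE big_distrr; apply: eq_bigr => i _; rewrite mxE /= mulrCA mulrA.
Qed.

Lemma ip_mulmxr (R : realType) n m d (A : 'M[R]_(n, m)) (X : 'M[R]_(n, d))
    (Y : 'M[R]_(m, d)) :
  ip X (A *m Y) = ip (A^T *m X) Y.
Proof. by rewrite ipC ip_mulmxl ipC. Qed.

Lemma Gsqn_ge0 (R : realType) nA d (rho : R) (Z beta : 'M[R]_(nA, d)) :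
  0 < rho -> 0 <= Gsqn rho Z beta.
Proof.
by move=> /ltW rho_ge0; rewrite addr_ge0 // mulr_ge0 ?invr_ge0 ?sqn_ge0.
Qed.

(* Every column of M_- sums to zero when no arc is a loop. *)
Lemma trmx_Mminus_stack_const (R : realType) N nA d
    (arc : 'I_nA -> 'I_N * 'I_N) (x : 'rV[R]_d) :
  (forall q, (arc q).1 != (arc q).2) ->
  (Mminus R arc)^T *m stack_const N x = 0.
Proof.
move=> no_loop; apply/matrixP => q j; rewrite !mxE.
under eq_bigr do rewrite !mxE.
rewrite -mulr_suml; apply/eqP; rewrite mulf_eq0; apply/orP; left; apply/eqP.
rewrite (bigD1 (arc q).1) //= eqxx (bigD1 (arc q).2) /=; last first.
  by rewrite eq_sym no_loop.
rewrite eq_sym (negbTE (no_loop q)) eqxx big1 ?addr0 ?subrr //.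
by move=> i /andP [/negbTE -> /negbTE ->].
Qed.

Lemma stack_grad_strongly_monotone (R : realType) N d
    (g : 'I_N -> 'rV[R]_d -> 'rV[R]_d) (m : 'I_N -> R) (mf : R)
    (X Y : 'M[R]_(N, d)) :
  (forall i u v, m i * sqnv (u - v) <= dotv (g i u - g i v) (u - v)) ->
  (forall i, mf <= m i) ->
  mf * sqn (X - Y) <= ip (X - Y) (stack_grad g X - stack_grad g Y).
Proof.
move=> g_mono mf_le.
have -> : sqn (X - Y) = \sum_(i < N) sqnv (row i X - row i Y).
  by apply: eq_bigr => i _; apply: eq_bigr => j _; rewrite !mxE.
have -> : ip (X - Y) (stack_grad g X - stack_grad g Y) =
    \sum_(i < N) dotv (g i (row i X) - g i (row i Y)) (row i X - row i Y).
  by apply: eq_bigr => i _; apply: eq_bigr => j _; rewrite !mxE mulrC.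
rewrite mulr_sumr; apply: ler_sum => i _.
have sqnv_ge0 : 0 <= sqnv (row i X - row i Y).
  by apply: sumr_ge0 => j _; exact: sqr_ge0.
exact: le_trans (ler_wpM2r sqnv_ge0 (mf_le i)) (g_mono _ _ _).
Qed.

Section NoisyStep.
Variables (R : realType) (N nA d : nat) (P Mm : 'M[R]_(N, nA)).
Variables (F : 'M[R]_(N, d) -> 'M[R]_(N, d)) (mf rho : R).
Variables (Xs X1 noise : 'M[R]_(N, d)) (Z0 Z1 b0 b1 bs : 'M[R]_(nA, d)).
Hypothesis rho_neq0 : rho != 0.
Hypothesis F_mono : mf * sqn (X1 - Xs) <= ip (X1 - Xs) (F X1 - F Xs).
Hypothesis Mm_Xs : Mm^T *m Xs = 0.
Hypothesis opt_Xs : F Xs + Mm *m bs = 0.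
Hypothesis step_X : F X1 + Mm *m b1 + noise = rho *: (P *m (Z0 - Z1)).
Hypothesis step_b : b1 - b0 - (rho / 2) *: (Mm^T *m X1) = 0.
Hypothesis step_Z : 2^-1 *: (P^T *m X1) - Z1 = 0.

Let Zs := 2^-1 *: (P^T *m Xs).
Let c := Mm^T *m (X1 - Xs).

Let b_incr : b1 - b0 = (rho / 2) *: c.
Proof. by apply/eqP; rewrite /c mulmxBr Mm_Xs subr0 -subr_eq0 step_b. Qed.

Let Z_dist : P^T *m (X1 - Xs) = 2 *: (Z1 - Zs).
Proof.
move/eqP: step_Z; rewrite subr_eq0 => /eqP <-.
by rewrite /Zs -scalerBr scalerA mulfV ?scale1r ?pnatr_eq0 // -mulmxBr.
Qed.

Let grad_gap : ip (X1 - Xs) (F X1 - F Xs) =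
  2 * rho * ip (Z1 - Zs) (Z0 - Z1) - ip c (b1 - bs) - ip (X1 - Xs) noise.
Proof.
have FX1 : F X1 = rho *: (P *m (Z0 - Z1)) - Mm *m b1 - noise.
  by rewrite -step_X addrAC !addrK.
have FXs : F Xs = - (Mm *m bs) by apply/eqP; rewrite -addr_eq0 opt_Xs.
rewrite FX1 FXs opprK ipDr !ipBr ipZr !ip_mulmxr Z_dist ipZl -/c !ipBr; ring.
Qed.

Lemma noisy_step_descent :
  mf * sqn (X1 - Xs) <=
    Gsqn rho (Z0 - Zs) (b0 - bs) - Gsqn rho (Z1 - Zs) (b1 - bs)
    - Gsqn rho (Z0 - Z1) (b0 - b1) - ip (X1 - Xs) noise.
Proof.
apply: le_trans F_mono _; rewrite grad_gap le_eqVlt; apply/orP; left; apply/eqP.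
have b1_dist : b1 - bs = (rho / 2) *: c + (b0 - bs) by rewrite -b_incr addrA subrK.
have Z0_dist : Z0 - Zs = (Z1 - Zs) + (Z0 - Z1) by rewrite [RHS]addrC addrA subrK.
rewrite /Gsqn Z0_dist (sqnD (Z1 - Zs)) -(opprB b1 b0) sqnN b_incr.
rewrite b1_dist (sqnD ((rho / 2) *: c)) (ipDr ((rho / 2) *: c)) ipZl ipZr !sqnZ.
rewrite -/(sqn c); field; exact: rho_neq0.
Qed.

End NoisyStep.

Theorem mainTheorem5 (R : realType) (N d nA : nat) (e : rel 'I_N)
  (arc : 'I_nA -> 'I_N * 'I_N)
  (f : 'I_N -> 'rV[R]_d -> R^o) (g : 'I_N -> 'rV[R]_d -> 'rV[R]_d)
  (m M : 'I_N -> R) (mf : R) (xstar : 'rV[R]_d) (betastar : 'M[R]_(nA, d))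
  (rho : R)
  (X : nat -> 'M[R]_(N, d)) (Z beta : nat -> 'M[R]_(nA, d))
  (w : nat -> 'M[R]_(N, d)) :
  simple_connected_graph e ->
  arc_enum e arc ->
  (forall i, is_gradient (f i) (g i)) ->
  (forall i, 0 < m i) ->
  (forall i u v, m i * sqnv (u - v) <= dotv (g i u - g i v) (u - v)) ->
  (forall i u v,
      Num.sqrt (sqnv (g i u - g i v)) <= M i * Num.sqrt (sqnv (u - v))) ->
  (forall i, mf <= m i) -> (exists i, mf = m i) ->
  (forall x, \sum_(i < N) f i xstar <= \sum_(i < N) f i x) ->
  (exists Y : 'M[R]_(N, d), betastar = (Mminus R arc)^T *m Y) ->
  stack_grad g (stack_const N xstar) + Mminus R arc *m betastar = 0 ->
  0 < rho ->
  (exists Y : 'M[R]_(N, d), beta 0%N = (Mminus R arc)^T *m Y) ->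
  Z 0%N = 2^-1 *: ((Mplus R arc)^T *m X 0%N) ->
  (forall k : nat,
      stack_grad g (X k.+1) + Mminus R arc *m beta k.+1
        + Num.sqrt 2 *: (degmx R e *m w k.+1)
      = rho *: (Mplus R arc *m (Z k - Z k.+1))) ->
  (forall k : nat,
      beta k.+1 - beta k - (rho / 2) *: ((Mminus R arc)^T *m X k.+1) = 0) ->
  (forall k : nat,
      2^-1 *: ((Mplus R arc)^T *m X k.+1) - Z k.+1 = 0) ->
  let Xstar := stack_const N xstar in
  let Zstar := 2^-1 *: ((Mplus R arc)^T *m Xstar) in
  forall k : nat,
    mf * sqn (X k.+1 - Xstar)
      <= Gsqn rho (Z k - Zstar) (beta k - betastar)
         - Gsqn rho (Z k.+1 - Zstar) (beta k.+1 - betastar)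
         - Gsqn rho (Z k - Z k.+1) (beta k - beta k.+1)
         - ip (X k.+1 - Xstar) (Num.sqrt 2 *: (degmx R e *m w k.+1))
    /\
    sqn (X k.+1 - Xstar + (Num.sqrt 2 * mf)^-1 *: (degmx R e *m w k.+1))
      <= mf^-1 * Gsqn rho (Z k - Zstar) (beta k - betastar)
         + (2 * mf ^+ 2)^-1 * sqn (degmx R e *m w k.+1).
Proof.
move=> [_ [loopless _]] [_ [arc_edge _]] _ m_gt0 g_mono _ mf_le [i0 mf_eq] _ _
  opt rho_gt0 _ _ stepI stepII stepIII Xs Zs k.
have mf_gt0 : 0 < mf by rewrite mf_eq m_gt0.
have no_loop q : (arc q).1 != (arc q).2.
  by apply/eqP => arc_q; have := arc_edge q; rewrite arc_q loopless.
set s := Num.sqrt 2; set Dw := degmx R e *m w k.+1.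
have descent := noisy_step_descent (F := stack_grad g) (lt0r_neq0 rho_gt0)
  (stack_grad_strongly_monotone _ _ g_mono mf_le)
  (trmx_Mminus_stack_const _ no_loop) opt (stepI k) (stepII k) (stepIII k).
split; first exact: descent.
have s_sq : s ^+ 2 = 2 by rewrite sqr_sqrtr ?ler0n.
have s_neq0 : s != 0 by rewrite gt_eqF ?sqrtr_gt0 ?ltr0n.
have -> : (s * mf)^-1 *: Dw = (2 * mf)^-1 *: (s *: Dw).
  by rewrite scalerA -{1}s_sq; congr (_ *: _); field; rewrite s_neq0 gt_eqF.
have bound : mf * sqn (X k.+1 - Xs) + ip (X k.+1 - Xs) (s *: Dw)
    <= Gsqn rho (Z k - Zs) (beta k - betastar).
  have := Gsqn_ge0 (Z k.+1 - Zs) (beta k.+1 - betastar) rho_gt0.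
  have := Gsqn_ge0 (Z k - Z k.+1) (beta k - beta k.+1) rho_gt0.
  lra.
apply: le_trans (sqn_addZ_le mf_gt0 bound) _.
rewrite sqnZ s_sq le_eqVlt; apply/orP; left; apply/eqP.
by field; rewrite gt_eqF.
Qed.
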